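(* Fix integers $m,n\ge2$. There exists a nonzero polynomial $\Psi_{m,n}$ with integer coefficients in the variables $a_0,\dots,a_m,b_0,\dots,b_n,c_0,\dots,c_n$ with the following property: for every field $k$ and all $f=\sum_{i=0}^ma_ix^{m-i}$, $g=\sum_{j=0}^nb_jx^{n-j}$, $h=\sum_{j=0}^nc_jx^{n-j}$ in $k[x]$, if there exists $(s,t)\in k^2\setminus\{(0,0)\}$ with $\deg\gcd(f,sg+th)\ge2$, then $\Psi_{m,n}(f,g,h)=0$ (evaluating at the coefficients of $f,g,h$). *)

From HB Require Import structures.
From mathcomp Require Import all_boot all_order all_algebra.
From mathcomp Require Import mpoly.
Set Implicit Arguments. Unset Strict Implicit. Unset Printing Implicit Defensive.
Import GRing.Theory.
Local Open Scope ring_scope.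

Definition poly_of_coefs (k : ringType) (d : nat) (a : 'I_d.+1 -> k) : {poly k} :=
  \sum_(i < d.+1) a i *: 'X^(d - i).

(* Coefficient vector (a_0..a_m, b_0..b_n, c_0..c_n), indexed by
   'I_(m.+1 + n.+1 + n.+1) in this order. *)
Definition coef_vec (k : ringType) (m n : nat)
  (a : 'I_m.+1 -> k) (b c : 'I_n.+1 -> k) : 'I_(m.+1 + n.+1 + n.+1) -> k :=
  fun i => match split i with
           | inl j => match split j with inl j1 => a j1 | inr j2 => b j2 end
           | inr j => c j
           end.

Definition eval_int_mpoly (k : ringType) (N : nat) (P : {mpoly int[N]})
  (v : 'I_N -> k) : k :=
  mmap (fun z : int => z%:~R) v P.

(* Put B(y, X) := (g(y) h(X) - g(X) h(y)) / (X - y) and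
   Psi := Res_y (f(y), Res_X (f(X), B(y, X))), computed for generic coefficients
   with Sylvester determinants of fixed formal degrees, so that Psi specializes
   coefficientwise to any field.  If f and s g + t h have a common factor of
   degree >= 2, let z be a root of it in an extension field.  Then
   s g(z) + t h(z) = 0, so s g + t h divides g(z) h - h(z) g = B(z, X) (X - z),
   and the cofactor of X - z in the common factor divides both f and B(z, .).
   Hence Res_X (f, B(z, .)) = 0, so z is a common root of f and of
   Res_X (f(X), B(y, X)), and Psi vanishes.  Psi is nonzero because for
   f = (x - 1) ... (x - m), g = x^n and h = 1 the value B(i, j) is minus a sum
   of positive monomials in i, j, hence never zero at pairs of roots of f. *)

From HB Require Import structures.
From mathcomp Require Import all_boot all_order all_algebra.
From mathcomp Require Import mpoly qfpoly zify.
From Stdlib Require Import Classical.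
Set Implicit Arguments. Unset Strict Implicit. Unset Printing Implicit Defensive.
Import Order.TTheory GRing.Theory Num.Theory.
Local Open Scope ring_scope.

Section FormalSylvester.
Variable R : comNzRingType.

(* The Sylvester matrix of p and q viewed as polynomials of formal degrees dp
   and dq; the library's Sylvester_mx uses the actual sizes, which can drop
   under specialization of the coefficients. *)
Definition fSylvester_mx (dp dq : nat) (p q : {poly R}) : 'M[R]_(dq + dp) :=
  col_mx (lin1_mx (poly_rV \o p \o* rVpoly)) (lin1_mx (poly_rV \o q \o* rVpoly)).

Definition fresultant dp dq (p q : {poly R}) := \det (fSylvester_mx dp dq p q).

Lemma mul_row_fSylvester dp dq p q (u : 'rV_dq) (v : 'rV_dp) :
  row_mx u v *m fSylvester_mx dp dq p q = poly_rV (rVpoly u * p + rVpoly v * q).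
Proof. by rewrite mul_row_col !mul_rV_lin1 /= linearD. Qed.

End FormalSylvester.

Lemma fresultant_map (R S : comNzRingType) (f : {rmorphism R -> S}) dp dq p q :
  f (fresultant dp dq p q) = fresultant dp dq (map_poly f p) (map_poly f q).
Proof.
rewrite /fresultant -det_map_mx map_col_mx; congr (\det (col_mx _ _));
  by apply: map_lin1_mx => v; rewrite map_poly_rV rmorphM /= map_rVpoly.
Qed.

Section FieldResultant.
Variable K : fieldType.
Implicit Types p q u v c : {poly K}.

Lemma size_bezout_combination dp dq p q u v :
  (size p <= dp.+1)%N -> (size q <= dq.+1)%N -> (size u <= dq)%N -> (size v <= dp)%N ->
  (size (u * p + v * q)%R <= dq + dp)%N.
Proof.
move=> sp sq su sv; rewrite (leq_trans (size_polyD _ _)) // geq_max.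
by rewrite !(leq_trans (size_polyMleq _ _)) //; lia.
Qed.

Lemma fresultant_eq0P dp dq p q : (size p <= dp.+1)%N -> (size q <= dq.+1)%N ->
  reflect (exists u v, [/\ (u, v) != (0, 0), (size u <= dq)%N, (size v <= dp)%N
                         & u * p + v * q = 0])
          (fresultant dp dq p q == 0).
Proof.
move=> sp sq; apply: (iffP det0P) => [[w nz_w w0] | [u [v [nz_uv su sv uv0]]]].
  exists (rVpoly (lsubmx w)), (rVpoly (rsubmx w)); split; rewrite ?size_poly //.
    apply: contra nz_w; rewrite xpair_eqE => /andP[/eqP u0 /eqP v0].
    rewrite -[w]hsubmxK -(rVpolyK (lsubmx w)) -(rVpolyK (rsubmx w)) u0 v0.
    by rewrite !raddf0 row_mx0.
  move: w0; rewrite -{1}[w]hsubmxK mul_row_fSylvester => /(congr1 rVpoly).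
  by rewrite raddf0 poly_rV_K // size_bezout_combination ?size_poly.
exists (row_mx (poly_rV u : 'rV_dq) (poly_rV v : 'rV_dp)).
  apply: contra nz_uv; rewrite row_mx_eq0 xpair_eqE => /andP[/eqP u0 /eqP v0].
  by rewrite -(poly_rV_K su) -(poly_rV_K sv) u0 v0 !raddf0 eqxx.
by rewrite (@mul_row_fSylvester _ dp dq p q) !poly_rV_K // uv0 raddf0.
Qed.

Lemma fresultant_eq0 dp dq p q c : (0 < dp)%N ->
  (size p <= dp.+1)%N -> (size q <= dq.+1)%N -> (1 < size c)%N ->
  c %| p -> c %| q -> fresultant dp dq p q = 0.
Proof.
move=> dp_gt0 sp sq sc cp cq; apply/eqP/fresultant_eq0P => //.
have nz_c : c != 0 by rewrite -size_poly_gt0 ltnW.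
have [/andP[/eqP-> /eqP->] | nz_pq] := boolP ((p == 0) && (q == 0)).
  by exists 0, 1; rewrite size_poly0 size_poly1 !mulr0 addr0 xpair_eqE oner_eq0 andbF.
exists (q %/ c), (- (p %/ c)); split.
- apply: contra nz_pq; rewrite xpair_eqE oppr_eq0 => /andP[/eqP q0 /eqP p0].
  by rewrite -(divpK cp) -(divpK cq) p0 q0 !mul0r eqxx.
- by rewrite size_divp //; move: sq sc; move: (size q) (size c); lia.
- by rewrite size_polyN size_divp //; move: sp sc; move: (size p) (size c); lia.
by rewrite -{1}(divpK cp) -{2}(divpK cq) mulNr mulrCA subrr.
Qed.

Lemma fresultant_neq0 dp dq p q :
  size p = dp.+1 -> (size q <= dq.+1)%N -> coprimep p q -> fresultant dp dq p q != 0.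
Proof.
move=> sp sq cop; apply/(fresultant_eq0P _ sq); rewrite ?sp //.
case=> u [v [nz_uv su sv uv0]].
have nz_p : p != 0 by rewrite -size_poly_gt0 sp.
have v0 : v = 0.
  apply: contraTeq (sv) => nz_v; rewrite -ltnNge -sp dvdp_leq //.
  rewrite -(Gauss_dvdpl _ cop).
  have -> : v * q = - (u * p) by apply/eqP; rewrite -addr_eq0 addrC uv0.
  by rewrite dvdpNr dvdp_mull.
move: uv0 nz_uv; rewrite v0 mul0r addr0 => /eqP; rewrite mulf_eq0 (negbTE nz_p) orbF.
by move/eqP->; rewrite eqxx.
Qed.

End FieldResultant.

Lemma irreducible_poly_scale (K : fieldType) (c : K) (p : {poly K}) :
  c != 0 -> irreducible_poly p -> irreducible_poly (c *: p).
Proof.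
move=> nz_c [szp irr_p]; split=> [|q szq]; first by rewrite size_scale.
rewrite dvdpZr // => /(irr_p q szq) qp.
by apply: eqp_trans qp _; rewrite eqp_sym eqp_scale.
Qed.

Lemma exists_irreducible_factor (K : fieldType) (q : {poly K}) : (1 < size q)%N ->
  exists2 p : {poly K}, irreducible_poly p & p %| q.
Proof.
elim: {q}_.+1 {-2}q (ltnSn (size q)) => // N IHN q szqN szq_gt1.
have [irr_q | red_q] := classic (irreducible_poly q); first by exists q.
suff [r [szr rq nrq]] : exists r : {poly K}, [/\ size r != 1%N, r %| q & ~~ (r %= q)].
  have nz_q : q != 0 by rewrite -size_poly_gt0 ltnW.
  have nz_r : r != 0 by apply: contraNneq nz_q => r0; rewrite -dvd0p -r0.
  have ltrq : (size r < size q)%N.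
    by rewrite ltn_neqAle dvdp_leq // andbT (dvdp_size_eqp rq).
  have [|p irr_p pr] := IHN r (leq_trans ltrq szqN).
    by rewrite ltn_neqAle eq_sym szr size_poly_gt0.
  by exists p => //; apply: dvdp_trans pr rq.
apply: NNPP => no_r; apply: red_q; split => [|r szr rq].
  exact: szq_gt1.
by apply/negPn/negP => nrq; apply: no_r; exists r.
Qed.

Lemma exists_root_extension (K : fieldType) (d : {poly K}) : (1 < size d)%N ->
  exists (L : fieldType) (e : {rmorphism K -> L}) (z : L), root (map_poly e d) z.
Proof.
move=> /exists_irreducible_factor[p0 irr_p0 p0d].
have nz_lc : lead_coef p0 != 0 by rewrite lead_coef_eq0 irredp_neq0.
pose p := (lead_coef p0)^-1 *: p0.
have mi_p : monic_irreducible_poly p.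
  split; first exact: irreducible_poly_scale (invr_neq0 nz_lc) irr_p0.
  by apply/monicP; rewrite lead_coefZ mulVf.
have pd : p %| d by rewrite dvdpZl ?invr_eq0.
exists {poly %/ p with mi_p}, (qpolyC p), (in_qpoly p 'X).
rewrite /root -in_qpoly_comp_horner comp_polyXr -(inj_eq val_inj) /= (mk_monicE mi_p).
by move: pd; rewrite Pdiv.Field.dvdpE.
Qed.

Section CrossPoly.
Variable R : comNzRingType.
Implicit Types g h : {poly R}.

(* With X := 'X the outer and y := 'Y the inner variable,
   cross_poly g h = g(y) h(X) - g(X) h(y), which vanishes at X = y. *)
Definition cross_poly g h : {poly {poly R}} := g%:P * h^:P - g^:P * h%:P.

Lemma root_cross_poly g h : root (cross_poly g h) 'X.
Proof.
have XC (p : {poly R}) : p^:P.['X] = p := comp_polyXr p.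
by apply/eqP; rewrite /cross_poly !hornerE /= !XC mulrC subrr.
Qed.

Lemma horner_eval_polyC (z : R) (p : {poly R}) : map_poly (horner_eval z) p^:P = p.
Proof.
by rewrite -map_poly_comp map_poly_id => // c _; rewrite /= horner_evalE hornerC.
Qed.

Lemma horner_eval_cross_poly g h (z : R) :
  map_poly (horner_eval z) (cross_poly g h) = g.[z] *: h - h.[z] *: g.
Proof.
rewrite rmorphB !rmorphM /= !map_polyC !horner_eval_polyC /= !horner_evalE.
by rewrite -!mul_polyC [g * _]mulrC.
Qed.

Lemma horner_eval_XsubX (z : R) :
  map_poly (horner_eval z) ('X - 'Y : {poly {poly R}}) = 'X - z%:P.
Proof. by rewrite rmorphB /= map_polyX map_polyC /= horner_evalE hornerX. Qed.

End CrossPoly.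

Lemma map_poly_polyC (R S : comNzRingType) (f : {rmorphism R -> S}) (p : {poly R}) :
  map_poly (map_poly f) p^:P = (map_poly f p)^:P.
Proof. by apply/polyP => i; rewrite !coef_map /= map_polyC. Qed.

Lemma map_cross_poly (R S : comNzRingType) (f : {rmorphism R -> S}) (g h : {poly R}) :
  map_poly (map_poly f) (cross_poly g h) = cross_poly (map_poly f g) (map_poly f h).
Proof. by rewrite rmorphB !rmorphM /= !map_polyC !map_poly_polyC. Qed.

Lemma map_XsubX (R S : comNzRingType) (f : {rmorphism R -> S}) :
  map_poly (map_poly f) ('X - 'Y) = 'X - 'Y.
Proof. by rewrite rmorphB /= map_polyX map_polyC /= map_polyX. Qed.

Lemma dvdp_cross_eval (K : fieldType) (g h : {poly K}) (s t z : K) :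
  (s, t) != (0, 0) -> root (s *: g + t *: h) z ->
  s *: g + t *: h %| g.[z] *: h - h.[z] *: g.
Proof.
move=> nz_st /eqP; rewrite !hornerE => rel.
have [t0 | nz_t] := eqVneq t 0.
  have nz_s : s != 0 by apply: contraNneq nz_st => s0; rewrite s0 t0.
  have gz0 : g.[z] = 0.
    by apply/eqP; move: rel; rewrite t0 mul0r addr0 => /eqP; rewrite mulf_eq0 (negbTE nz_s).
  rewrite gz0 t0 !scale0r addr0 sub0r dvdpNr (eqp_dvdl _ (eqp_scale _ nz_s)).
  by rewrite -mul_polyC dvdp_mull.
rewrite -(dvdpZr _ _ nz_t).
have -> : t *: (g.[z] *: h - h.[z] *: g) = g.[z] *: (s *: g + t *: h).
  rewrite scalerBr !scalerDr !scalerA [t * _]mulrC [g.[z] * s]mulrC.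
  have -> : t * h.[z] = - (s * g.[z]) by apply/eqP; rewrite -addr_eq0 addrC rel.
  by rewrite scaleNr opprK addrC.
by rewrite -mul_polyC dvdp_mull.
Qed.

Lemma fresultant_cross_eq0 (K : fieldType) dp dq (f g h b : {poly K}) (s t z : K) :
  (0 < dp)%N -> (size f <= dp.+1)%N -> (size b <= dq.+1)%N -> (s, t) != (0, 0) ->
  (2 < size (gcdp f (s *: g + t *: h)))%N -> root (gcdp f (s *: g + t *: h)) z ->
  g.[z] *: h - h.[z] *: g = b * ('X - z%:P) ->
  fresultant dp dq f b = 0.
Proof.
set u := s *: g + t *: h => dp_gt0 szf szb nz_st szd /factor_theorem[e de] Eb.
have sze : (1 < size e)%N.
  have nz_e : e != 0 by apply: contraTneq szd => e0; rewrite de e0 mul0r size_poly0.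
  by move: szd; rewrite de size_Mmonic ?monicXsubC // size_XsubC addn2.
apply: (fresultant_eq0 dp_gt0 szf szb sze).
  by apply: dvdp_trans (dvdp_gcdl f u); rewrite de dvdp_mulr.
have nz_Xz : 'X - z%:P != 0 by rewrite polyXsubC_eq0.
rewrite -(dvdp_mul2r _ _ nz_Xz) -Eb -de.
apply: dvdp_trans (dvdp_gcdr f u) (dvdp_cross_eval nz_st _).
by rewrite -dvdp_XsubCl (dvdp_trans _ (dvdp_gcdr f u)) // de dvdp_mull.
Qed.

Lemma iterated_fresultant_eq0 (K : fieldType) dp dq D (f g h : {poly K})
    (B : {poly {poly K}}) (s t : K) :
  (0 < dp)%N -> (size f <= dp.+1)%N -> (size B <= dq.+1)%N ->
  (size (fresultant dp dq f^:P B) <= D.+1)%N ->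
  cross_poly g h = B * ('X - 'Y) -> (s, t) != (0, 0) ->
  (2 < size (gcdp f (s *: g + t *: h)))%N ->
  fresultant dp D f (fresultant dp dq f^:P B) = 0.
Proof.
set u := s *: g + t *: h => dp_gt0 szf szB szr EB nz_st szd.
have [L [e [z dz]]] := exists_root_extension (ltnW szd).
set r := fresultant dp dq f^:P B.
have fz : root (map_poly e f) z.
  rewrite -dvdp_XsubCl; apply: dvdp_trans (_ : _ %| map_poly e (gcdp f u)) _.
    by rewrite dvdp_XsubCl.
  by rewrite dvdp_map dvdp_gcdl.
pose Bz := map_poly (horner_eval z) (map_poly (map_poly e) B).
have rz : root (map_poly e r) z.
  rewrite /root -horner_evalE /r (fresultant_map (map_poly e)) fresultant_map.
  rewrite map_poly_polyC horner_eval_polyC -/Bz; apply/eqP.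
  apply: (fresultant_cross_eq0 (g := map_poly e g) (h := map_poly e h)
                               (s := e s) (t := e t) (z := z)).
  - done.
  - by rewrite size_map_poly.
  - exact: leq_trans (size_poly _ _) (leq_trans (size_poly _ _) szB).
  - by apply: contra nz_st; rewrite !xpair_eqE !fmorph_eq0.
  - by rewrite -!map_polyZ -rmorphD -gcdp_map size_map_poly.
  - by rewrite -!map_polyZ -rmorphD -gcdp_map.
  have := congr1 (map_poly (horner_eval z) \o map_poly (map_poly e)) EB => /=.
  by rewrite map_cross_poly horner_eval_cross_poly !rmorphM /= map_XsubX horner_eval_XsubX.
apply/eqP; rewrite -(fmorph_eq0 e) fresultant_map; apply/eqP.
apply: (@fresultant_eq0 _ _ _ _ _ ('X - z%:P)) => //.
- by rewrite size_map_poly.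
- by rewrite size_map_poly.
- by rewrite size_XsubC.
- by rewrite dvdp_XsubCl.
by rewrite dvdp_XsubCl.
Qed.

Lemma coprimep_prod_XsubC (K : fieldType) (rs : seq K) (q : {poly K}) :
  all (fun x => ~~ root q x) rs -> coprimep (\prod_(x <- rs) ('X - x%:P)) q.
Proof.
elim: rs => [|x rs IH] /=; first by rewrite big_nil coprime1p.
by rewrite big_cons coprimepMl => /andP[xq /IH ->]; rewrite coprimep_sym coprimep_XsubC xq.
Qed.

Lemma Xn_divided_difference_lt0 (R : numFieldType) n (x y : R) (b : {poly R}) :
  (0 < n)%N -> 0 < x -> 0 < y -> b * ('X - x%:P) = (x ^+ n)%:P - 'X^n -> b.[y] < 0.
Proof.
move=> n_gt0 x_gt0 y_gt0 Eb.
pose S := \sum_(i < n) 'X^(n.-1 - i) * x%:P ^+ i.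
have -> : b = - S.
  apply: (mulIf (monic_neq0 (monicXsubC x))).
  by rewrite Eb mulNr mulrC -subrXX rmorphXn opprB.
rewrite hornerN oppr_lt0 horner_sum; case: n n_gt0 {Eb S} => // n _.
rewrite big_ord_recl ltr_wpDr ?hornerE ?exprn_gt0 // sumr_ge0 // => i _.
by rewrite !hornerE mulr_ge0 // exprn_ge0 // ltW.
Qed.

Lemma iterated_fresultant_Xn_neq0 (R : numFieldType) (rs : seq R) n dp dq D
    (B : {poly {poly R}}) :
  let f := \prod_(x <- rs) ('X - x%:P) in
  size rs = dp -> (0 < n)%N -> all (fun x => 0 < x) rs -> (size B <= dq.+1)%N ->
  (size (fresultant dp dq f^:P B) <= D.+1)%N ->
  cross_poly 'X^n 1 = B * ('X - 'Y) ->
  fresultant dp D f (fresultant dp dq f^:P B) != 0.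
Proof.
move=> f <- n_gt0 /allP rs_gt0 szB szr EB.
have szf : size f = (size rs).+1 by rewrite size_prod_XsubC.
apply: (fresultant_neq0 szf szr); apply: coprimep_prod_XsubC; apply/allP => x xrs.
rewrite /root -horner_evalE fresultant_map horner_eval_polyC.
apply: (fresultant_neq0 szf (leq_trans (size_poly _ _) szB)).
apply: coprimep_prod_XsubC; apply/allP => y yrs.
rewrite /root ltr0_neq0 // (Xn_divided_difference_lt0 n_gt0 (rs_gt0 x xrs) (rs_gt0 y yrs)) //.
have := congr1 (map_poly (horner_eval x)) EB.
rewrite horner_eval_cross_poly rmorphM /= horner_eval_XsubX => <-.
by rewrite !hornerE scale1r alg_polyC.
Qed.

Lemma map_poly_of_coefs (R S : nzRingType) (f : {rmorphism R -> S}) d (a : 'I_d.+1 -> R) :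
  map_poly f (poly_of_coefs a) = poly_of_coefs (f \o a).
Proof.
by rewrite /poly_of_coefs rmorph_sum; apply: eq_bigr => i _; rewrite /= map_polyZ map_polyXn.
Qed.

Lemma size_poly_of_coefs (R : nzRingType) d (a : 'I_d.+1 -> R) :
  (size (poly_of_coefs a) <= d.+1)%N.
Proof.
apply: (big_ind (fun p : {poly R} => size p <= d.+1)%N) => [|p q|i _].
- by rewrite size_poly0.
- by move=> szp szq; rewrite (leq_trans (size_polyD _ _)) // geq_max szp szq.
by rewrite (leq_trans (size_scale_leq _ _)) // size_polyXn ltnS leq_subr.
Qed.

Lemma poly_of_coefs_rev (R : nzRingType) d (p : {poly R}) : (size p <= d.+1)%N ->
  poly_of_coefs (fun i : 'I_d.+1 => p`_(d - i)) = p.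
Proof.
move=> szp; have {2}-> : p = \poly_(i < d.+1) p`_i.
  apply/polyP => j; rewrite coef_poly; case: ltnP => // dj.
  by rewrite nth_default // (leq_trans szp dj).
rewrite /poly_of_coefs (reindex_inj rev_ord_inj) poly_def; apply: eq_bigr => i _.
by rewrite /= subSS subKn // -ltnS.
Qed.

Section GenericPolynomials.
Variables m n : nat.
Local Notation N := (m.+1 + n.+1 + n.+1).

Definition gen_f : {poly {mpoly int[N]}} :=
  poly_of_coefs (fun i : 'I_m.+1 => 'X_(lshift n.+1 (lshift n.+1 i))).
Definition gen_g : {poly {mpoly int[N]}} :=
  poly_of_coefs (fun i : 'I_n.+1 => 'X_(lshift n.+1 (rshift m.+1 i))).
Definition gen_h : {poly {mpoly int[N]}} :=
  poly_of_coefs (fun i : 'I_n.+1 => 'X_(rshift (m.+1 + n.+1) i)).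

Definition gen_B := cross_poly gen_g gen_h %/ ('X - 'Y).

Lemma cross_gen_B : cross_poly gen_g gen_h = gen_B * ('X - 'Y).
Proof.
by rewrite Pdiv.IdomainUnit.divpK ?dvdp_XsubCl ?root_cross_poly // lead_coefXsubC unitr1.
Qed.

Definition gen_res := fresultant m (size gen_B) gen_f^:P gen_B.

Definition Psi := fresultant m (size gen_res) gen_f gen_res.

Section Specialization.
Variables (k : fieldType) (a : 'I_m.+1 -> k) (b c : 'I_n.+1 -> k).

Definition specialization : {rmorphism {mpoly int[N]} -> k} :=
  mmap (fun z : int => z%:~R) (coef_vec a b c).

Lemma specialization_X i : specialization 'X_i = coef_vec a b c i.
Proof. by rewrite /= mmapX mmap1U. Qed.

Lemma specialization_gen_f : map_poly specialization gen_f = poly_of_coefs a.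
Proof.
rewrite map_poly_of_coefs /poly_of_coefs; apply: eq_bigr => i _.
by rewrite /= specialization_X /coef_vec !(unsplitK (inl _)).
Qed.

Lemma specialization_gen_g : map_poly specialization gen_g = poly_of_coefs b.
Proof.
rewrite map_poly_of_coefs /poly_of_coefs; apply: eq_bigr => i _.
by rewrite /= specialization_X /coef_vec (unsplitK (inl _)) (unsplitK (inr _)).
Qed.

Lemma specialization_gen_h : map_poly specialization gen_h = poly_of_coefs c.
Proof.
rewrite map_poly_of_coefs /poly_of_coefs; apply: eq_bigr => i _.
by rewrite /= specialization_X /coef_vec (unsplitK (inr _)).
Qed.

Lemma cross_specialization :
  cross_poly (poly_of_coefs b) (poly_of_coefs c)
  = map_poly (map_poly specialization) gen_B * ('X - 'Y).
Proof.
rewrite -specialization_gen_g -specialization_gen_h -map_cross_poly cross_gen_B.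
by rewrite rmorphM /= map_XsubX.
Qed.

Lemma specialization_gen_res : map_poly specialization gen_res
  = fresultant m (size gen_B) (poly_of_coefs a)^:P (map_poly (map_poly specialization) gen_B).
Proof. by rewrite fresultant_map map_poly_polyC specialization_gen_f. Qed.

Lemma specialization_Psi : eval_int_mpoly Psi (coef_vec a b c)
  = fresultant m (size gen_res) (poly_of_coefs a) (map_poly specialization gen_res).
Proof. by rewrite -specialization_gen_f -fresultant_map. Qed.

End Specialization.
End GenericPolynomials.

Lemma Psi_eq0_of_common_factor m n (k : fieldType) (a : 'I_m.+1 -> k)
    (b c : 'I_n.+1 -> k) (s t : k) :
  (0 < m)%N -> (s, t) != (0, 0) ->
  (2 < size (gcdp (poly_of_coefs a) (s *: poly_of_coefs b + t *: poly_of_coefs c)))%N ->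
  eval_int_mpoly (Psi m n) (coef_vec a b c) = 0.
Proof.
move=> m_gt0 nz_st szd; rewrite specialization_Psi specialization_gen_res.
apply: iterated_fresultant_eq0 (cross_specialization a b c) nz_st szd => //.
- exact: size_poly_of_coefs.
- exact: leq_trans (size_poly _ _) (leqnSn _).
by rewrite -specialization_gen_res (leq_trans (size_poly _ _)).
Qed.

Lemma Psi_neq0 m n : (0 < n)%N -> Psi m n != 0.
Proof.
move=> n_gt0; pose rs : seq rat := [seq i.+1%:R | i <- iota 0 m].
have szrs : size rs = m by rewrite size_map size_iota.
pose f := \prod_(x <- rs) ('X - x%:P).
pose a := fun i : 'I_m.+1 => f`_(m - i).
pose b := fun i : 'I_n.+1 => ('X^n : {poly rat})`_(n - i).
pose c := fun i : 'I_n.+1 => (1 : {poly rat})`_(n - i).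
have fa : poly_of_coefs a = f by rewrite poly_of_coefs_rev // size_prod_XsubC szrs.
have Xb : poly_of_coefs b = 'X^n by rewrite poly_of_coefs_rev // size_polyXn.
have Ic : poly_of_coefs c = 1 by rewrite poly_of_coefs_rev // size_poly1.
apply/negP => /eqP Psi0.
have := specialization_Psi a b c; rewrite Psi0 /eval_int_mpoly raddf0.
rewrite specialization_gen_res fa; apply/eqP; rewrite eq_sym.
apply: (iterated_fresultant_Xn_neq0 (n := n) szrs n_gt0).
- by apply/allP => _ /mapP[i _ ->]; rewrite ltr0Sn.
- exact: leq_trans (size_poly _ _) (leqnSn _).
- by rewrite -/f -fa -specialization_gen_res (leq_trans (size_poly _ _)).
by rewrite -Xb -Ic; apply: cross_specialization.
Qed.

Theorem proposition7p1 (m n : nat) (hm : (2 <= m)%N) (hn : (2 <= n)%N) :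
  exists Psi : {mpoly int[m.+1 + n.+1 + n.+1]},
    Psi != 0 /\
    forall (k : fieldType) (a : 'I_m.+1 -> k) (b c : 'I_n.+1 -> k),
      (exists s t : k, (s, t) != (0, 0) /\
         (2 < size (gcdp (poly_of_coefs a)
                         (s *: poly_of_coefs b + t *: poly_of_coefs c)))%N) ->
      eval_int_mpoly Psi (coef_vec a b c) = 0.
Proof.
exists (Psi m n); split; first exact: Psi_neq0 (ltnW hn).
by move=> k a b c [s [t [nz_st szd]]]; apply: Psi_eq0_of_common_factor (ltnW hm) nz_st szd.
Qed.
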